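(* Let $L\subseteq\Sigma^*$ be a regular closed language with $\kappa(L)=n$ and $L\notin\{\emptyset,\Sigma^*\}$, such that the eight languages $L$, $L^-$, $L^{-*}=L^-\cup\{\epsilon\}$, $L^{-*-}=L\setminus\{\epsilon\}$, $L^*$, $L^{*-}$, $L^{*-*}=L^{*-}\cup\{\epsilon\}$, $L^{*-*-}=L^*\setminus\{\epsilon\}$ are pairwise distinct (in particular $L\ne L^*$). Then: - $\kappa(L)=\kappa(L^-)=n$; - $\kappa(L^* )=\kappa(L^{*-})\le f(n)$; - $\kappa(L^{*-*})=\kappa(L^{*-*-})\le f(n)+1$; - $\kappa(L^{-*})=\kappa(L^{-*-})\le n+1$. Here $f(n)=2^{n-2}+1$ if $L$ is prefix-closed, $f(n)=n-1$ if $L$ is suffix-closed, and $f(n)=2$ if $L$ is factor-closed or subword-closed. Moreover, for each of the classes prefix-closed, suffix-closed and subword-closed (hence also factor-closed), and every sufficiently large $n$ (e.g. $n\ge 4$), there exists a language $L$ of that class with $\kappa(L)=n$ attaining all these bounds simultaneously.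
   Context: $\Sigma$ is a finite non-empty alphabet. $\kappa(L)$ is the number of distinct left quotients $L_w=\{x\mid wx\in L\}$ of $L$ (its state complexity). $L^-=\Sigma^*\setminus L$ is complement and $L^*$ is Kleene star; superscript strings such as $L^{*-*}$ denote successive application of the operations from left to right. A language is prefix-closed (suffix-, factor-, subword-closed) if it contains every prefix (suffix, factor, subword) of each of its words, where subword means scattered subsequence. ''Closed'' means any of these four. *)

From mathcomp Require Import all_boot.
Set Implicit Arguments. Unset Strict Implicit. Unset Printing Implicit Defensive.

Definition lang (Sigma : Type) := seq Sigma -> Prop.

Definition lang_eq (Sigma : Type) (L1 L2 : lang Sigma) : Prop :=
  forall w, L1 w <-> L2 w.

Definition quot (Sigma : Type) (L : lang Sigma) (w : seq Sigma) : lang Sigma :=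
  fun x => L (w ++ x).

(* kappa L = n : L has exactly n distinct left quotients *)
Definition has_kappa (Sigma : Type) (L : lang Sigma) (n : nat) : Prop :=
  exists ws : seq (seq Sigma),
    size ws = n /\
    (forall i j, i < n -> j < n -> i <> j ->
       ~ lang_eq (quot L (nth [::] ws i)) (quot L (nth [::] ws j))) /\
    (forall w, exists2 i, i < n & lang_eq (quot L w) (quot L (nth [::] ws i))).

Definition regular (Sigma : finType) (L : lang Sigma) : Prop :=
  exists (Q : finType) (q0 : Q) (delta : Q -> Sigma -> Q) (F : pred Q),
    forall w, L w <-> F (foldl delta q0 w).

Definition empty_lang (Sigma : Type) : lang Sigma := fun _ => False.
Definition full_lang (Sigma : Type) : lang Sigma := fun _ => True.

Definition compl (Sigma : Type) (L : lang Sigma) : lang Sigma := fun w => ~ L w.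

Definition star (Sigma : Type) (L : lang Sigma) : lang Sigma :=
  fun w => exists ws : seq (seq Sigma), (forall i, i < size ws -> L (nth [::] ws i)) /\ w = flatten ws.

Definition prefix_closed (Sigma : Type) (L : lang Sigma) : Prop :=
  forall u v, L (u ++ v) -> L u.
Definition suffix_closed (Sigma : Type) (L : lang Sigma) : Prop :=
  forall u v, L (u ++ v) -> L v.
Definition factor_closed (Sigma : Type) (L : lang Sigma) : Prop :=
  forall u v x, L (u ++ v ++ x) -> L v.
Definition subword_closed (Sigma : eqType) (L : lang Sigma) : Prop :=
  forall u w, subseq u w -> L w -> L u.

Inductive closure_class := Prefix | Suffix | Factor | Subword.

Definition closed_in (c : closure_class) (Sigma : finType) (L : lang Sigma) : Prop :=
  match c with
  | Prefix => prefix_closed L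
  | Suffix => suffix_closed L
  | Factor => factor_closed L
  | Subword => subword_closed L
  end.

Definition fbound (c : closure_class) (n : nat) : nat :=
  match c with
  | Prefix => 2 ^ (n - 2) + 1
  | Suffix => n - 1
  | Factor | Subword => 2
  end.

Definition eight (Sigma : Type) (L : lang Sigma) : seq (lang Sigma) :=
  [:: L; compl L; star (compl L); compl (star (compl L));
      star L; compl (star L); star (compl (star L));
      compl (star (compl (star L)))].

Definition eight_distinct (Sigma : Type) (L : lang Sigma) : Prop :=
  forall i j, i < 8 -> j < 8 -> i <> j ->
    ~ lang_eq (nth L (eight L) i) (nth L (eight L) j).

Definition hyps (c : closure_class) (Sigma : finType) (L : lang Sigma) (n : nat) : Prop :=
  [/\ regular L, closed_in c L, has_kappa L n,
      ~ lang_eq L (@empty_lang Sigma) /\ ~ lang_eq L (@full_lang Sigma)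
    & eight_distinct L].

From mathcomp Require Import all_boot zify.
From Stdlib Require Import Classical ClassicalEpsilon.
Set Implicit Arguments. Unset Strict Implicit. Unset Printing Implicit Defensive.

(* A closed language L contains the empty word and is closed on one side, so a
   factorization of a word outside L into words outside L can be merged into one
   factor: L^{-*} = L^- + {eps}.  The same applies to L^*, which is again closed,
   so each starred complement has at most one quotient more than the language
   starred, namely that of eps.  The quotient of L^* at w is determined
   - for prefix-closed L, by the set of states of L reached by the last factors
     v of the factorizations w = u v with u in L^* and v in L; this set is empty
     or contains the initial state and avoids a rejecting one, whence 2^(n-2)+1;
   - for suffix-closed L, by the state of what remains of w after its longest
     prefix in L^*; it does not matter when the remainder is in L, and otherwise
     it is one of the at most n-2 rejecting states, whence n-1;
   - for factor-closed L, by whether w is in L^* at all, whence 2.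
   The bounds are attained by explicit automata whose states, and the quotients
   of their stars, are separated by short words. *)

Definition classicb (P : Prop) : bool :=
  if excluded_middle_informative P then true else false.

Lemma classicbP (P : Prop) : reflect P (classicb P).
Proof. by rewrite /classicb; case: excluded_middle_informative; constructor. Qed.

Section Quotients.
Variable S : Type.
Implicit Types (L M : lang S) (w x : seq S).

Lemma lang_eq_sym L M : lang_eq L M -> lang_eq M L.
Proof. by move=> h w; split=> /h. Qed.

Lemma lang_eq_trans L M (N : lang S) : lang_eq L M -> lang_eq M N -> lang_eq L N.
Proof. by move=> h1 h2 w; split=> [/h1/h2|/h2/h1]. Qed.

Lemma quot_nil L w : quot L w [::] <-> L w.
Proof. by rewrite /quot cats0. Qed.

Definition separated (I : finType) L (g : I -> seq S) :=
  forall i j, i != j -> ~ lang_eq (quot L (g i)) (quot L (g j)).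

Lemma quot_dedup L (ws : seq (seq S)) :
  exists ws0 : seq (seq S), [/\ size ws0 <= size ws,
    (forall i j, i < size ws0 -> j < size ws0 -> i <> j ->
       ~ lang_eq (quot L (nth [::] ws0 i)) (quot L (nth [::] ws0 j)))
  & (forall i, i < size ws -> exists2 j, j < size ws0 &
       lang_eq (quot L (nth [::] ws i)) (quot L (nth [::] ws0 j)))].
Proof.
elim: ws => [|w ws [ws0 [le_ws0 sep_ws0 cover_ws0]]]; first by exists [::].
have [[j [lt_j eq_j]] | new_w] :=
  classic (exists j, j < size ws0 /\ lang_eq (quot L w) (quot L (nth [::] ws0 j))).
  exists ws0; split => //; first exact: leqW.
  by case=> [|i] /= lt_i; [exists j | apply: cover_ws0].
exists (w :: ws0); split => //=.
- case=> [|i] [|j] //= lt_i lt_j neq_ij.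
  + by move=> eq_j; apply: new_w; exists j.
  + by move=> eq_i; apply: new_w; exists i; split => //; apply: lang_eq_sym.
  + by apply: sep_ws0 => // eq_ij; apply: neq_ij; rewrite eq_ij.
- case=> [|i] /= lt_i; first by exists 0.
  by have [j lt_j eq_j] := cover_ws0 i lt_i; exists j.+1.
Qed.

Lemma has_kappa_leq_cover L (ws : seq (seq S)) :
  (forall w, exists2 i, i < size ws & lang_eq (quot L w) (quot L (nth [::] ws i))) ->
  exists2 m, m <= size ws & has_kappa L m.
Proof.
move=> cover_ws; have [ws0 [le_ws0 sep_ws0 cover_ws0]] := quot_dedup L ws.
exists (size ws0) => //; exists ws0; split => //; split => // w.
have [i lt_i eq_i] := cover_ws w; have [j lt_j eq_j] := cover_ws0 i lt_i.
by exists j => //; apply: lang_eq_trans eq_i eq_j.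
Qed.

Lemma has_kappa_leq_key L (key : seq S -> nat) b :
  (forall w, key w < b) ->
  (forall w w', key w = key w' -> lang_eq (quot L w) (quot L w')) ->
  exists2 m, m <= b & has_kappa L m.
Proof.
move=> key_lt key_quot.
pose rep i := epsilon (inhabits [::]) (fun w => key w = i).
have [m le_m kappa_m] : exists2 m, m <= size (map rep (iota 0 b)) & has_kappa L m.
  apply: has_kappa_leq_cover => w; exists (key w); first by rewrite size_map size_iota.
  rewrite (nth_map 0) ?size_iota // nth_iota // add0n; apply: key_quot.
  by symmetry; apply: (epsilon_spec (inhabits [::]) (fun w' => key w' = key w)); exists w.
by exists m; rewrite // size_map size_iota in le_m.
Qed.

Lemma has_kappa_leq_fkey (K : finType) L (key : seq S -> K) (A : {set K}) :
  (forall w, key w \in A) ->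
  (forall w w', key w = key w' -> lang_eq (quot L w) (quot L w')) ->
  exists2 m, m <= #|A| & has_kappa L m.
Proof.
move=> key_in key_quot.
apply: (has_kappa_leq_key (key := fun w => index (key w) (enum A))).
  by move=> w; rewrite cardE index_mem mem_enum.
move=> w w' eq_idx; apply: key_quot.
have key_w : key w \in enum A by rewrite mem_enum.
have key_w' : key w' \in enum A by rewrite mem_enum.
by rewrite -(nth_index (key w) key_w) -(nth_index (key w) key_w') eq_idx.
Qed.

Lemma has_kappa_index L n : has_kappa L n ->
  exists (ws : seq (seq S)) (idx : seq S -> 'I_n),
    forall w, lang_eq (quot L w) (quot L (nth [::] ws (idx w))).
Proof.
move=> [ws [_ [_ cover_ws]]].
have cover_ord w : exists i : 'I_n, lang_eq (quot L w) (quot L (nth [::] ws i)).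
  by have [i lt_i eq_i] := cover_ws w; exists (Ordinal lt_i).
exists ws, (fun w => proj1_sig (constructive_indefinite_description _ (cover_ord w))).
by move=> w; exact: (proj2_sig (constructive_indefinite_description _ (cover_ord w))).
Qed.

Lemma has_kappa_separated_leq (I : finType) L m (g : I -> seq S) :
  has_kappa L m -> separated L g -> #|I| <= m.
Proof.
move=> /has_kappa_index [ws [idx quot_idx]] sep_g.
rewrite -(card_ord m); apply: (@leq_card _ _ (fun i => idx (g i))) => i j eq_ij.
apply/eqP/negPn/negP => neq_ij; apply: (sep_g i j neq_ij).
apply: lang_eq_trans (quot_idx (g i)) _; rewrite eq_ij; exact/lang_eq_sym/quot_idx.
Qed.

Lemma has_kappa_separated (I : finType) L (g : I -> seq S) :
  (exists2 m, m <= #|I| & has_kappa L m) -> separated L g -> has_kappa L #|I|.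
Proof.
move=> [m le_m kappa_m] sep_g.
by have /eqP <- : m == #|I| by rewrite eqn_leq le_m (has_kappa_separated_leq kappa_m sep_g).
Qed.

Lemma has_kappa_leq_dfa (Q : finType) L (q0 : Q) (delta : Q -> S -> Q) (F : pred Q) :
  (forall w, L w <-> F (foldl delta q0 w)) -> exists2 m, m <= #|Q| & has_kappa L m.
Proof.
move=> L_dfa; rewrite -cardsT.
apply: (has_kappa_leq_fkey (key := foldl delta q0)) => // w w' eq_run x.
by rewrite /quot !L_dfa !foldl_cat eq_run.
Qed.

Lemma separated_dfa (Q : finType) L (q0 : Q) (delta : Q -> S -> Q)
    (F : pred Q) (h : Q -> seq S) :
  (forall w, L w <-> F (foldl delta q0 w)) -> (forall q, foldl delta q0 (h q) = q) ->
  (forall q q', q != q' -> exists x, F (foldl delta q x) != F (foldl delta q' x)) ->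
  separated L h.
Proof.
move=> L_dfa run_h distinguish q q' neq_q eq_q; have [x] := distinguish q q' neq_q.
have := eq_q x; rewrite /quot !L_dfa !foldl_cat !run_h => eq_F.
by apply/negP; rewrite negbK; apply/eqP; apply/idP/idP => /eq_F.
Qed.

Lemma has_kappa_compl L n : has_kappa L n -> has_kappa (compl L) n.
Proof.
move=> [ws [size_ws [sep_ws cover_ws]]]; exists ws; split => //; split.
  move=> i j lt_i lt_j neq_ij eq_compl; apply: (sep_ws i j lt_i lt_j neq_ij) => x.
  by have := eq_compl x; rewrite /quot /compl; split => h; apply: NNPP; tauto.
move=> w; have [i lt_i eq_i] := cover_ws w; exists i => // x.
by have := eq_i x; rewrite /quot /compl; tauto.
Qed.

End Quotients.

Lemma has_kappa_regular (Sigma : finType) (L : lang Sigma) n : has_kappa L n -> regular L.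
Proof.
move=> /has_kappa_index [ws [idx quot_idx]].
pose delta (q : 'I_n) (a : Sigma) := idx (nth [::] ws q ++ [:: a]).
exists 'I_n, (idx [::]), delta, (fun q : 'I_n => classicb (L (nth [::] ws q))).
have run_quot w : lang_eq (quot L w) (quot L (nth [::] ws (foldl delta (idx [::]) w))).
  elim/last_ind: w => [|w a IH]; first exact: quot_idx.
  rewrite -cats1 foldl_cat; apply: lang_eq_trans (quot_idx _) => x.
  by rewrite /quot -!catA; apply: IH.
move=> w; have := run_quot w [::]; rewrite !quot_nil => eq_w.
by split => [/eq_w/classicbP | /classicbP/eq_w].
Qed.

Lemma cat_eq_cat (T : Type) (a b c d : seq T) : a ++ b = c ++ d ->
  (exists e, c = a ++ e /\ b = e ++ d) \/ (exists e, a = c ++ e /\ d = e ++ b).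
Proof.
elim: a c => [|x a IH] [|y c] /=.
- by move=> ->; left; exists [::].
- by move=> ->; left; exists (y :: c).
- by move=> <-; right; exists (x :: a).
- move=> [-> /IH [[e [-> ->]]|[e [-> ->]]]]; [left|right]; by exists e.
Qed.

Section Star.
Variable S : Type.
Implicit Types (L M : lang S) (u v w x y z : seq S).

Lemma star_nil L : star L [::].
Proof. by exists [::]. Qed.

Lemma star1 L w : L w -> star L w.
Proof. by move=> Lw; exists [:: w]; split => [[|i]|] //=; rewrite cats0. Qed.

Lemma star_ind L (P : seq S -> Prop) :
  P [::] -> (forall u v, L u -> P v -> P (u ++ v)) -> forall w, star L w -> P w.
Proof.
move=> P_nil P_cat w [ws [L_ws ->]]; elim: ws L_ws => [|u ws IH] L_ws //=.
by apply: P_cat; [exact: (L_ws 0) | apply: IH => i; apply: (L_ws i.+1)].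
Qed.

Lemma star_cons L u v : L u -> star L v -> star L (u ++ v).
Proof. by move=> Lu [ws [L_ws ->]]; exists (u :: ws); split => // [[|i]] //= /L_ws. Qed.

Lemma star_cat L u v : star L u -> star L v -> star L (u ++ v).
Proof.
move=> star_u star_v; move: u star_u; apply: star_ind => // u w Lu star_wv.
by rewrite -catA; apply: star_cons.
Qed.

Lemma star_cat_split L w x : L [::] -> star L (w ++ x) ->
  exists u v y z, [/\ w = u ++ v, star L u, x = y ++ z, L (v ++ y) & star L z].
Proof.
move=> L_nil star_wx.
suff split_all t : star L t -> star L t /\ forall w x, t = w ++ x -> exists u v y z,
    [/\ w = u ++ v, star L u, x = y ++ z, L (v ++ y) & star L z].
  by have [_ /(_ w x erefl)] := split_all _ star_wx.
move: t; apply: star_ind.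
  split; first exact: star_nil.
  case=> [|//] [|//] _; exists [::], [::], [::], [::]; split => //; exact: star_nil.
move=> u v Lu [star_v IH]; split; first exact: star_cons.
move=> w' x' /cat_eq_cat [[e [-> v_eq]]|[e [u_eq ->]]].
  have [u' [v' [y [z [-> star_u' -> L_v'y star_z]]]]] := IH e x' v_eq.
  exists (u ++ u'), v', y, z; split => //; first by rewrite catA.
  exact: star_cons.
exists [::], w', e, v; split => //; [exact: star_nil | by rewrite -u_eq].
Qed.

Lemma star_quot_invariant L : L [::] ->
  (forall v, L v -> lang_eq (quot L v) L) -> lang_eq L (star L).
Proof.
move=> L_nil quot_L w; split; first exact: star1.
by move: w; apply: star_ind => // u v Lu Lv; apply: (quot_L u Lu v).2.
Qed.

Lemma star_cons_inv L a x : star L (a :: x) ->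
  exists u v, [/\ x = u ++ v, L (a :: u) & star L v].
Proof.
suff first_factor w : star L w -> star L w /\
    forall a x, w = a :: x -> exists u v, [/\ x = u ++ v, L (a :: u) & star L v].
  by case/first_factor => _ /(_ a x erefl).
move: w; apply: star_ind; first by split; [exact: star_nil | by []].
move=> [|b u] v Lu [star_v IH]; (split; first exact: star_cons) => //.
by move=> a' x' [<- <-]; exists u, v.
Qed.

Lemma not_star_cons L a x :
  (forall u v, x = u ++ v -> ~ L (a :: u)) -> ~ star L (a :: x).
Proof. by move=> notL /star_cons_inv [u [v [x_eq Lu _]]]; apply: notL x_eq Lu. Qed.

Lemma star_last L w : star L w -> w <> [::] ->
  exists u v, [/\ w = u ++ v, star L u, L v & v <> [::]].
Proof.
move: w; apply: star_ind => // u [|a v] Lu IH nonnil.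
  by exists [::], u; rewrite cats0 in nonnil *; split => //; exact: star_nil.
have [u' [v' [-> star_u' Lv' nonnil']]] := IH (fun e => ltac:(discriminate e)).
by exists (u ++ u'), v'; split => //; [rewrite catA | apply: star_cons].
Qed.

Lemma not_star L w : w <> [::] ->
  (forall m, drop m w <> [::] -> ~ L (drop m w) \/ ~ star L (take m w)) -> ~ star L w.
Proof.
move=> nonnil last_bad /star_last /(_ nonnil) [u [v [w_eq star_u Lv nonnil_v]]].
by have := last_bad (size u); rewrite w_eq drop_size_cat // take_size_cat //; tauto.
Qed.

Lemma prefix_closed_nil L w : prefix_closed L -> L w -> L [::].
Proof. by move=> pc_L Lw; apply: (pc_L [::] w). Qed.

Lemma suffix_closed_nil L w : suffix_closed L -> L w -> L [::].
Proof. by move=> sc_L Lw; apply: (sc_L w [::]); rewrite cats0. Qed.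

Lemma factor_closed_prefix L : factor_closed L -> prefix_closed L.
Proof. by move=> fc_L u v; apply: (fc_L [::] u v). Qed.

Lemma factor_closed_suffix L : factor_closed L -> suffix_closed L.
Proof. by move=> fc_L u v Luv; apply: (fc_L u v [::]); rewrite cats0. Qed.

Lemma prefix_closed_star L : prefix_closed L -> L [::] -> prefix_closed (star L).
Proof.
move=> pc_L L_nil u v /(star_cat_split L_nil) [u' [v' [y [z [-> star_u' _ L_v'y _]]]]].
exact: star_cat star_u' (star1 (pc_L _ _ L_v'y)).
Qed.

Lemma suffix_closed_star L : suffix_closed L -> L [::] -> suffix_closed (star L).
Proof.
move=> sc_L L_nil u v /(star_cat_split L_nil) [u' [v' [y [z [_ _ -> L_v'y star_z]]]]].
exact: star_cons (sc_L _ _ L_v'y) star_z.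
Qed.

Definition prefix_or_suffix_closed L := prefix_closed L \/ suffix_closed L.

Lemma prefix_or_suffix_closed_star L :
  prefix_or_suffix_closed L -> L [::] -> prefix_or_suffix_closed (star L).
Proof.
by move=> [pc_L|sc_L] L_nil; [left; apply: prefix_closed_star|right; apply: suffix_closed_star].
Qed.

Lemma prefix_or_suffix_closed_nil L w : prefix_or_suffix_closed L -> L w -> L [::].
Proof. by case=> [/prefix_closed_nil|/suffix_closed_nil]; apply. Qed.

Lemma star_complE M w : M [::] -> prefix_or_suffix_closed M ->
  star (compl M) w <-> w = [::] \/ ~ M w.
Proof.
move=> M_nil psc_M; split; last by case=> [->|notM_w]; [exact: star_nil | exact: star1].
move: w; apply: star_ind; first by left.
move=> u v notM_u [->|notM_v]; first by rewrite cats0; right.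
by right; case: psc_M => [pc_M /pc_M | sc_M /sc_M].
Qed.

Lemma star_compl_cat M w x : M [::] -> prefix_or_suffix_closed M -> w <> [::] ->
  star (compl M) (w ++ x) <-> ~ M (w ++ x).
Proof.
move=> M_nil psc_M nonnil; rewrite star_complE //; split; last by right.
by case=> // /nilP; rewrite /nilp size_cat; case: w nonnil.
Qed.

End Star.

Lemma subword_closed_factor (S : eqType) (L : lang S) : subword_closed L -> factor_closed L.
Proof.
move=> swc_L u v x; apply: swc_L.
exact: subseq_trans (prefix_subseq v x) (suffix_subseq u (v ++ x)).
Qed.

Lemma closed_in_prefix_or_suffix c (S : finType) (L : lang S) :
  closed_in c L -> prefix_or_suffix_closed L.
Proof.
case: c => /= [|||/subword_closed_factor] closed_L; try by [left|right].
all: by left; apply: factor_closed_prefix.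
Qed.

Lemma has_kappa_star_compl_leq (S : Type) (M : lang S) k :
  M [::] -> prefix_or_suffix_closed M -> has_kappa M k ->
  exists2 m, m <= k.+1 & has_kappa (star (compl M)) m.
Proof.
move=> M_nil psc_M /has_kappa_index [ws [idx quot_idx]].
apply: (has_kappa_leq_key (key := fun w => if w is [::] then 0 else (idx w).+1)).
  by case=> [|a w] //; rewrite ltnS.
case=> [|a w] [|b w'] //= [eq_idx] x; rewrite /quot !star_compl_cat //.
have := quot_idx (a :: w) x; have := quot_idx (b :: w') x; rewrite /quot eq_idx; tauto.
Qed.

Lemma card_setC2 (T : finType) (a b : T) : a != b -> #|~: [set a; b]| = #|T| - 2.
Proof. by move=> neq_ab; rewrite -(cardsC [set a; b]) cards2 neq_ab addKn. Qed.

Lemma card_sets_mem_notin (T : finType) (a b : T) : a != b ->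
  #|[set X : {set T} | (a \in X) && (b \notin X)]| <= 2 ^ (#|T| - 2).
Proof.
move=> neq_ab; set B := [set X | _].
have -> : #|B| = #|[set X :\ a | X in B]|.
  rewrite card_in_imset // => X Y; rewrite !inE => /andP [aX _] /andP [aY _] eq_XY.
  by rewrite -(setD1K aX) -(setD1K aY) eq_XY.
rewrite -(card_setC2 neq_ab).
rewrite -card_powerset; apply: subset_leq_card; apply/subsetP => Y /imsetP [X].
rewrite inE => /andP [_ bX] ->; rewrite powersetE; apply/subsetP => x.
rewrite in_setD1 in_setC in_set2 => /andP [/negbTE-> xX] /=.
by apply: contraNneq bX => <-.
Qed.

Lemma card_sets (T : finType) : #|{: {set T}}| = 2 ^ #|T|.
Proof.
rewrite -cardsT -card_powerset; apply: eq_card => X.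
by rewrite inE powersetE subsetT.
Qed.

Section PrefixClosedStar.
Variables (S : Type) (L : lang S) (n : nat).
Hypotheses (pc_L : prefix_closed L) (L_nil : L [::]).
Variables (ws : seq (seq S)) (idx : seq S -> 'I_n).
Hypothesis quot_idx : forall w, lang_eq (quot L w) (quot L (nth [::] ws (idx w))).

Definition last_factor_states w : {set 'I_n} :=
  [set i | classicb (exists u v, [/\ w = u ++ v, star L u, idx v = i & L v])].

Lemma quot_star_last_factor_states w w' x :
  last_factor_states w = last_factor_states w' -> star L (w ++ x) -> star L (w' ++ x).
Proof.
move=> eq_states /(star_cat_split L_nil) [u [v [y [z [w_eq star_u -> L_vy star_z]]]]].
have : idx v \in last_factor_states w'.
  rewrite -eq_states inE; apply/classicbP; exists u, v; split => //; exact: pc_L L_vy.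
rewrite inE => /classicbP [u' [v' [-> star_u' eq_idx _]]].
have L_v'y : L (v' ++ y) by apply/(quot_idx v' y); rewrite eq_idx; apply/(quot_idx v y).
by rewrite -catA; apply: star_cat star_u' _; rewrite catA; apply: star_cons.
Qed.

Lemma last_factor_states_shape w z : ~ L z ->
  last_factor_states w = set0 \/
  (idx [::] \in last_factor_states w /\ idx z \notin last_factor_states w).
Proof.
move=> notL_z; have [->|/set0Pn [i]] := eqVneq (last_factor_states w) set0; first by left.
rewrite inE => /classicbP [u [v [w_eq star_u _ Lv]]]; right; split.
  rewrite inE; apply/classicbP; exists w, [::]; split; rewrite ?cats0 //.
  by rewrite w_eq; apply: star_cat star_u (star1 Lv).
rewrite inE; apply/classicbP => [[u' [v' [_ _ eq_idx Lv']]]]; apply: notL_z.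
by apply/quot_nil/(quot_idx z [::]); rewrite -eq_idx; apply/(quot_idx v' [::])/quot_nil.
Qed.

End PrefixClosedStar.

Lemma has_kappa_star_prefix_closed (S : Type) (L : lang S) n z :
  prefix_closed L -> L [::] -> ~ L z -> has_kappa L n ->
  exists2 m, m <= 2 ^ (n - 2) + 1 & has_kappa (star L) m.
Proof.
move=> pc_L L_nil notL_z /has_kappa_index [ws [idx quot_idx]].
have neq_idx : idx [::] != idx z.
  apply: contra_notN notL_z => /eqP eq_idx.
  by apply/quot_nil/(quot_idx z [::]); rewrite -eq_idx; apply/(quot_idx [::] [::]).
pose A := set0 |: [set X : {set 'I_n} | (idx [::] \in X) && (idx z \notin X)].
have [m le_m kappa_m] : exists2 m, m <= #|A| & has_kappa (star L) m.
  apply: (has_kappa_leq_fkey (key := last_factor_states L idx)).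
    move=> w; rewrite in_setU1 inE.
    case: (last_factor_states_shape L_nil quot_idx w notL_z) => [->|[in_nil notin_z]].
      by rewrite eqxx.
    by rewrite in_nil notin_z orbT.
  by move=> w w' eq_states x; split; apply: quot_star_last_factor_states.
exists m => //; apply: leq_trans le_m _.
rewrite cardsU1 addnC leq_add ?leq_b1 //.
by have := card_sets_mem_notin neq_idx; rewrite card_ord.
Qed.

Section SuffixClosedStar.
Variables (S : Type) (L : lang S).
Hypotheses (sc_L : suffix_closed L) (L_nil : L [::]).

Lemma star_prefix_exists w : exists i, (i <= size w) && classicb (star L (take i w)).
Proof. by exists 0; rewrite leq0n take0; apply/classicbP/star_nil. Qed.

Lemma star_prefix_bounded w i : (i <= size w) && classicb (star L (take i w)) -> i <= size w.
Proof. by case/andP. Qed.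

Definition star_prefix_len w := ex_maxn (star_prefix_exists w) (@star_prefix_bounded w).

Definition star_remainder w := drop (star_prefix_len w) w.

Lemma star_cat_remainder w x : star L (w ++ x) <->
  exists y z, [/\ x = y ++ z, L (star_remainder w ++ y) & star L z].
Proof.
rewrite /star_remainder /star_prefix_len.
case: ex_maxnP => k /andP [le_k /classicbP star_k] max_k; split.
  move=> /(star_cat_split L_nil) [u [v [y [z [w_eq star_u -> L_vy star_z]]]]].
  exists y, z; split => //.
  have le_u : size u <= k.
    by apply: max_k; rewrite w_eq size_cat leq_addr take_size_cat //; apply/classicbP.
  have v_eq : v = drop (size u) w by rewrite w_eq drop_size_cat.
  have -> : drop k w = drop (k - size u) v by rewrite v_eq drop_drop subnK.
  by apply: (@sc_L (take (k - size u) v)); rewrite catA cat_take_drop.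
move=> [y [z [-> L_ry star_z]]].
rewrite -(cat_take_drop k w) -catA; apply: star_cat star_k _.
by rewrite catA; apply: star_cons.
Qed.

Lemma star_cat_remainder_in w x :
  L (star_remainder w) -> star L (w ++ x) <-> star L x.
Proof.
move=> L_r; rewrite star_cat_remainder; split.
  by move=> [y [z [-> /sc_L L_y star_z]]]; apply: star_cons.
by move=> star_x; exists [::], x; rewrite cats0.
Qed.

Variables (n : nat) (ws : seq (seq S)) (idx : seq S -> 'I_n).
Hypothesis quot_idx : forall w, lang_eq (quot L w) (quot L (nth [::] ws (idx w))).

Definition remainder_state w : option 'I_n :=
  if classicb (L (star_remainder w)) then None else Some (idx (star_remainder w)).

Lemma quot_star_remainder_state w w' :
  remainder_state w = remainder_state w' -> lang_eq (quot (star L) w) (quot (star L) w').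
Proof.
rewrite /remainder_state /quot => eq_state x.
case: classicbP eq_state => L_r; case: classicbP => L_r' // eq_state.
  by rewrite !star_cat_remainder_in.
case: eq_state => eq_idx; rewrite !star_cat_remainder.
have eq_r y : L (star_remainder w ++ y) <-> L (star_remainder w' ++ y).
  have := quot_idx (star_remainder w) y; have := quot_idx (star_remainder w') y.
  by rewrite /quot eq_idx; tauto.
by split => [[y [z [-> /eq_r L_ry star_z]]] | [y [z [-> /eq_r L_ry star_z]]]]; exists y, z.
Qed.

Lemma remainder_state_rejecting w i : remainder_state w = Some i -> ~ L (nth [::] ws i).
Proof.
rewrite /remainder_state; case: classicbP => // notL_r [<-].
by have := quot_idx (star_remainder w) [::]; rewrite /quot !cats0; tauto.
Qed.

End SuffixClosedStar.

Lemma has_kappa_star_suffix_closed (S : Type) (L : lang S) n :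
  suffix_closed L -> L [::] -> ~ lang_eq L (star L) -> has_kappa L n ->
  exists2 m, m <= n - 1 & has_kappa (star L) m.
Proof.
move=> sc_L L_nil L_neq_star /has_kappa_index [ws [idx quot_idx]].
have idx_L u : L u <-> L (nth [::] ws (idx u)).
  by have := quot_idx u [::]; rewrite /quot !cats0.
have [v Lv quot_v] : exists2 v, L v & ~ lang_eq (quot L v) (quot L [::]).
  apply: NNPP => all_quot; apply/L_neq_star/star_quot_invariant => // v Lv x.
  by apply: NNPP => neq_v; apply: all_quot; exists v => // /(_ x).
have neq_idx : idx [::] != idx v.
  apply: contra_notN quot_v => /eqP eq_idx.
  by apply: lang_eq_trans (quot_idx _) _; rewrite -eq_idx; apply: lang_eq_sym.
pose B := [set i : 'I_n | ~~ classicb (L (nth [::] ws i))].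
have [m le_m kappa_m] :
    exists2 m, m <= #|None |: [set Some i | i in B]| & has_kappa (star L) m.
  apply: (has_kappa_leq_fkey (key := remainder_state L idx)); last first.
    exact: quot_star_remainder_state.
  move=> w; case E : (remainder_state L idx w) => [i|]; last exact: setU11.
  rewrite setU1r // imset_f // inE; apply/negP => /classicbP.
  exact: (remainder_state_rejecting quot_idx E).
exists m => //; apply: leq_trans le_m _.
have le_B : #|B| <= n - 2.
  have <- : #|~: [set idx [::]; idx v]| = n - 2 by rewrite card_setC2 // card_ord.
  apply/subset_leq_card/subsetP => i.
  rewrite !inE; apply: contra => /orP [] /eqP ->; apply/classicbP.
    exact/(idx_L [::]).
  exact/(idx_L v).
have two_le_n : 2 <= n.
  by have := max_card [set idx [::]; idx v]; rewrite cards2 neq_idx card_ord.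
rewrite cardsU1 card_imset; last exact: Some_inj.
apply: leq_trans (leq_add (leq_b1 _) le_B) _.
by rewrite add1n -subSn // subSS.
Qed.

Lemma has_kappa_star_factor_closed (S : Type) (L : lang S) :
  prefix_closed L -> suffix_closed L -> L [::] ->
  exists2 m, m <= 2 & has_kappa (star L) m.
Proof.
move=> pc_L sc_L L_nil; have pc_star := prefix_closed_star pc_L L_nil.
have sc_star := suffix_closed_star sc_L L_nil.
have [m le_m kappa_m] : exists2 m, m <= #|[set: bool]| & has_kappa (star L) m.
  apply: (has_kappa_leq_fkey (key := fun w => classicb (star L w))) => // w w' eq_key x.
  rewrite /quot; case: classicbP eq_key => star_w; case: classicbP => star_w' // _.
    by split => /sc_star; apply: star_cat.
  by split => /pc_star; [case/star_w | case/star_w'].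
by exists m; rewrite // cardsT card_bool in le_m.
Qed.

Lemma has_kappa_star_leq_fbound c (Sigma : finType) (L : lang Sigma) n z :
  closed_in c L -> L [::] -> ~ L z -> ~ lang_eq L (star L) -> has_kappa L n ->
  exists2 m, m <= fbound c n & has_kappa (star L) m.
Proof.
move=> closed_L L_nil notL_z L_neq_star kappa_L.
case: c closed_L => /= [pc_L | sc_L | fc_L | /subword_closed_factor fc_L].
- exact: has_kappa_star_prefix_closed pc_L L_nil notL_z kappa_L.
- exact: has_kappa_star_suffix_closed sc_L L_nil L_neq_star kappa_L.
all: apply: has_kappa_star_factor_closed => //.
all: by [apply: factor_closed_prefix | apply: factor_closed_suffix].
Qed.

Lemma closed_kappa_bounds c (Sigma : finType) (L : lang Sigma) n : hyps c L n ->
  [/\ has_kappa (compl L) n,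
      (exists m, [/\ has_kappa (star L) m, has_kappa (compl (star L)) m
                    & m <= fbound c n]),
      (exists m, [/\ has_kappa (star (compl (star L))) m,
                    has_kappa (compl (star (compl (star L)))) m
                    & m <= fbound c n + 1])
    & (exists m, [/\ has_kappa (star (compl L)) m,
                    has_kappa (compl (star (compl L))) m
                    & m <= n + 1])].
Proof.
move=> [_ closed_L kappa_L [L_nonempty L_nonfull] distinct8].
have [w Lw] : exists w, L w.
  by apply: NNPP => no_w; apply: L_nonempty => u; split => // Lu; apply: no_w; exists u.
have [z notL_z] : exists z, ~ L z.
  apply: NNPP => no_z; apply: L_nonfull => u; split => // _.
  by apply: NNPP => notL_u; apply: no_z; exists u.
have L_neq_star : ~ lang_eq L (star L) by apply: (distinct8 0 4).
have psc_L := closed_in_prefix_or_suffix closed_L.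
have L_nil := prefix_or_suffix_closed_nil psc_L Lw.
have [m le_m kappa_star] := has_kappa_star_leq_fbound closed_L L_nil notL_z L_neq_star kappa_L.
have psc_star := prefix_or_suffix_closed_star psc_L L_nil.
have [m1 le_m1 kappa1] := has_kappa_star_compl_leq (star_nil L) psc_star kappa_star.
have [m2 le_m2 kappa2] := has_kappa_star_compl_leq L_nil psc_L kappa_L.
split; first exact: has_kappa_compl.
- by exists m; split => //; exact: has_kappa_compl.
- exists m1; split; [by [] | exact: has_kappa_compl | by rewrite addn1 (leq_trans le_m1)].
- by exists m2; split; [| exact: has_kappa_compl | rewrite addn1].
Qed.

Section SeparatingFamilies.
Variable S : Type.
Implicit Types (L M : lang S).

(* In M^{-*} the quotient of a nonempty word v is that of v in M^-; it
   differs from the quotient of the empty word exactly when this holds. *)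
Definition separated_from_nil M (v : seq S) :=
  M v \/ exists2 x, x <> [::] & ~ (M x <-> M (v ++ x)).

Definition separating_family (I : finType) M (g : I -> seq S) :=
  [/\ forall i, g i <> [::], separated M g & forall i, separated_from_nil M (g i)].

Lemma star_compl_separated (I : finType) M (g : I -> seq S) :
  M [::] -> prefix_or_suffix_closed M -> separating_family M g ->
  separated (star (compl M)) (oapp g [::]).
Proof.
move=> M_nil psc_M [nonnil_g sep_g nil_sep_g].
have sep_nil i : ~ lang_eq (quot (star (compl M)) [::]) (quot (star (compl M)) (g i)).
  move=> eq_nil; case: (nil_sep_g i) => [M_gi | [x nonnil_x neq_x]].
    by have := eq_nil [::]; rewrite /quot cats0 star_compl_cat // cats0 => [[/(_ (star_nil _))]].
  have := eq_nil x; rewrite /quot /= star_compl_cat // star_complE //; tauto.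
case=> [i|] [j|] /= neq_ij eq_ij.
- apply: (sep_g i j); first by apply: contraNneq neq_ij => ->.
  move=> x; have := eq_ij x; rewrite /quot !star_compl_cat //.
  by split => ?; apply: NNPP; tauto.
- exact/(sep_nil i)/lang_eq_sym.
- exact: (sep_nil j).
- by [].
Qed.

(* The memberships of [::], x and y in the eight languages form eight distinct
   patterns. *)
Lemma eight_distinct_witness L x y : L [::] -> prefix_or_suffix_closed L ->
  x <> [::] -> L x -> star L y -> ~ L y -> eight_distinct L.
Proof.
move=> L_nil psc_L nonnil_x Lx star_y notL_y.
have nonnil_y : y <> [::] by move=> y_nil; apply: notL_y; rewrite y_nil.
have starL_nil : star L [::] := star_nil L.
have psc_star := prefix_or_suffix_closed_star psc_L L_nil.
have := star_complE _ L_nil psc_L; have := star_complE _ starL_nil psc_star.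
move=> starC_starL starC_L.
have starL_x : star L x := star1 Lx.
have := starC_L [::]; have := starC_L x; have := starC_L y.
have := starC_starL [::]; have := starC_starL x; have := starC_starL y.
rewrite /compl => e1 e2 e3 e4 e5 e6 i j lt_i lt_j neq_ij eq_ij.
have := eq_ij [::]; have := eq_ij x; have := eq_ij y; clear eq_ij.
move: lt_i lt_j neq_ij; rewrite /eight /compl.
by case: i => [|[|[|[|[|[|[|[|i]]]]]]]]; case: j => [|[|[|[|[|[|[|[|j]]]]]]]] => //= _ _ _; tauto.
Qed.

End SeparatingFamilies.

Lemma has_kappa_star_compl_attained (S : Type) (I : finType) (M : lang S) (g : I -> seq S) m :
  M [::] -> prefix_or_suffix_closed M -> separating_family M g ->
  has_kappa (star (compl M)) m -> m <= #|I| + 1 -> has_kappa (star (compl M)) (#|I| + 1).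
Proof.
move=> M_nil psc_M fam_g kappa_m le_m; rewrite addn1 -card_option.
apply: has_kappa_separated (star_compl_separated M_nil psc_M fam_g).
by exists m; rewrite // card_option -addn1.
Qed.

Lemma bounds_attained c (Sigma : finType) (L : lang Sigma) n x y
    (I J : finType) (g : I -> seq Sigma) (h : J -> seq Sigma) :
  0 < #|Sigma| -> closed_in c L -> x <> [::] -> L x -> star L y -> ~ L y ->
  (exists2 m, m <= n & has_kappa L m) ->
  #|J| = n -> separating_family L h -> #|I| = fbound c n -> separating_family (star L) g ->
  [/\ 0 < #|Sigma|, hyps c L n, has_kappa (star L) (fbound c n),
      has_kappa (star (compl (star L))) (fbound c n + 1)
    & has_kappa (star (compl L)) (n + 1)].
Proof.
move=> Sigma_nonempty closed_L nonnil_x Lx star_y notL_y [m le_m kappa_m] card_J fam_h card_I fam_g.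
have psc_L := closed_in_prefix_or_suffix closed_L.
have L_nil := prefix_or_suffix_closed_nil psc_L Lx.
have kappa_L : has_kappa L n.
  have [_ sep_h _] := fam_h.
  by rewrite -card_J; apply: has_kappa_separated sep_h; exists m; rewrite ?card_J.
have hyps_L : hyps c L n.
  split => //; first exact: has_kappa_regular kappa_L.
    by split => L_eq; [have /L_eq := L_nil | apply/notL_y/L_eq].
  exact: eight_distinct_witness L_nil psc_L nonnil_x Lx star_y notL_y.
have [_ [m1 [kappa1 _ le_m1]] [m2 [kappa2 _ le_m2]] [m3 [kappa3 _ le_m3]]] :=
  closed_kappa_bounds hyps_L.
split => //; rewrite -?card_I -?card_J.
- have [_ sep_g _] := fam_g.
  by apply: has_kappa_separated sep_g; exists m1; rewrite ?card_I.
- apply: has_kappa_star_compl_attained fam_g kappa2 _ => //; first exact: star_nil.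
    exact: prefix_or_suffix_closed_star.
  by rewrite card_I.
- by apply: has_kappa_star_compl_attained fam_h kappa3 _; rewrite ?card_J.
Qed.

Section PrefixExample.
Variable k : nat.
Notation letter := ('I_k.+2 + 'I_k.+2)%type.

(* Letters [inl i] and [inr i] open and close a block of index [i]; the state
   [Some (Some j)] records the open block [j], [Some None] means no open
   block, and [None] is the sink. *)
Definition pstep (q : option (option 'I_k.+2)) (a : letter) : option (option 'I_k.+2) :=
  match q, a with
  | Some None, inl i => Some (Some i)
  | Some (Some j), inl _ => Some (Some j)
  | Some (Some j), inr i => if i == j then Some None else None
  | _, _ => None
  end.

Definition plang : lang letter := fun w => foldl pstep (Some None) w != None.

Lemma pstep_sink w : foldl pstep None w = None.
Proof. by elim: w. Qed.

Lemma pstep_open j (s : seq 'I_k.+2) : foldl pstep (Some (Some j)) (map inl s) = Some (Some j).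
Proof. by elim: s. Qed.

Lemma plang_prefix : prefix_closed plang.
Proof. by move=> u v; rewrite /plang foldl_cat; case: (foldl _ _ u); rewrite ?pstep_sink. Qed.

Lemma plang_close_notin (s : seq 'I_k.+2) i :
  i \notin s -> ~ plang (map inl s ++ [:: inr i]).
Proof.
case: s => [|j s] //= notin_i; rewrite /plang /= foldl_cat pstep_open /=.
by move: notin_i; rewrite in_cons negb_or => /andP [/negbTE -> _].
Qed.

Lemma star_plang_open (s : seq 'I_k.+2) : star plang (map inl s).
Proof. by elim: s => [|j s IH]; [exact: star_nil | exact: (@star_cons _ _ [:: inl j])]. Qed.

Definition pword (q : option (option 'I_k.+2)) : seq letter :=
  match q with
  | None => [:: inr ord0]
  | Some None => [:: inl ord0; inr ord0]
  | Some (Some i) => [:: inl i]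
  end.

Lemma pword_run q : foldl pstep (Some None) (pword q) = q.
Proof. by case: q => [[i|]|] //=; rewrite eqxx. Qed.

Lemma pword_family : separating_family plang pword.
Proof.
split; first by case=> [[]|].
- apply: (separated_dfa (delta := pstep) (F := fun q => q != None) _ pword_run) => // q q' neq_q.
  case: q q' neq_q => [[i|]|] [[j|]|] //= neq_q.
  all: try by exists [::].
  all: try by [exists [:: inr i]; rewrite /= eqxx | exists [:: inr j]; rewrite /= eqxx].
  by exists [:: inr i]; rewrite /= eqxx; case: (i =P j) neq_q => [->|_]; rewrite ?eqxx.
- case=> [q|]; first by left; rewrite /plang pword_run.
  by right; exists [:: inl ord0] => //; rewrite /plang /= => -[/(_ isT)].
Qed.

Definition star_pword (X : option {set 'I_k.+2}) : seq letter :=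
  if X is Some X then [:: inl ord0; inr ord0] ++ map inl (enum X) else [:: inr ord0].

Lemma plang_block i : plang [:: inl i; inr i].
Proof. by rewrite /plang /= eqxx. Qed.

Lemma star_pword_in (X : {set 'I_k.+2}) : star plang (star_pword (Some X)).
Proof. exact: star_cons (plang_block _) (star_plang_open _). Qed.

Lemma star_pword_close_in (X : {set 'I_k.+2}) i :
  i \in X -> star plang (star_pword (Some X) ++ [:: inr i]).
Proof.
rewrite /star_pword -mem_enum => /splitPr [p q]; rewrite map_cat -!catA.
apply: star_cons (plang_block _) _; apply: star_cat (star_plang_open p) (star1 _).
by rewrite /plang /= foldl_cat pstep_open /= eqxx.
Qed.

Lemma star_pword_close_notin (X : {set 'I_k.+2}) i :
  i \notin X -> ~ star plang (star_pword (Some X) ++ [:: inr i]).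
Proof.
rewrite -mem_enum => notin_i; apply: not_star => // -[|[|m]] /= nonnil; left.
- exact: plang_close_notin.
- by rewrite /plang -cat1s foldl_cat /= pstep_sink.
move: nonnil; rewrite drop_cat size_map; case: ltnP => [lt_m _ | le_m].
  rewrite -map_drop; apply: plang_close_notin; apply: contra notin_i; exact: mem_drop.
by case: (m - _) => [|r] //= _; rewrite /plang.
Qed.

Lemma not_star_plang_sink x : ~ star plang (inr ord0 :: x).
Proof.
move=> star_x; have [u [v [_ L_u _]]] := star_cons_inv star_x.
by move: L_u; rewrite /plang /= pstep_sink.
Qed.

Lemma star_pword_family : separating_family (star plang) star_pword.
Proof.
split; first by case.
- case=> [X|] [Y|] // neq_XY eq_XY.
  + have [i neq_i] : exists i, (i \in X) != (i \in Y).
      apply: NNPP => all_eq; move/eqP: neq_XY; apply; congr Some; apply/setP => i.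
      by apply: NNPP => neq_i; apply: all_eq; exists i; apply/eqP.
    have [star_X star_Y] := eq_XY [:: inr i]; rewrite /quot in star_X star_Y.
    case: (boolP (i \in X)) neq_i => [iX | iX]; case: (boolP (i \in Y)) => // iY _.
      exact: star_pword_close_notin iY (star_X (star_pword_close_in iX)).
    exact: star_pword_close_notin iX (star_Y (star_pword_close_in iY)).
  + have := eq_XY [::]; rewrite /quot !cats0 => -[/(_ (star_pword_in X)) star_sink _].
    exact: not_star_plang_sink star_sink.
  + have := eq_XY [::]; rewrite /quot !cats0 => -[_ /(_ (star_pword_in Y))] star_sink.
    exact: not_star_plang_sink star_sink.
- case=> [X|]; first by left; apply: star_pword_in.
  right; exists [:: inl ord0] => //; case=> /(_ (star1 (isT : plang [:: inl ord0]))) star_sink _.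
  exact: not_star_plang_sink star_sink.
Qed.

Lemma prefix_example :
  [/\ 0 < #|{: letter}|, hyps Prefix plang k.+4, has_kappa (star plang) (fbound Prefix k.+4),
      has_kappa (star (compl (star plang))) (fbound Prefix k.+4 + 1)
    & has_kappa (star (compl plang)) (k.+4 + 1)].
Proof.
apply: (bounds_attained (c := Prefix) (n := k.+4) (x := [:: inl ord0])
  (y := [:: inl ord0; inl ord_max; inr ord_max])
  _ plang_prefix _ _ _ _ _ _ pword_family _ star_pword_family) => //.
- by rewrite card_sum card_ord.
- exact: (@star_cons _ _ [:: inl ord0]) (star1 (plang_block _)).
- have [m le_m kappa_m] := has_kappa_leq_dfa (q0 := Some None) (delta := pstep)
    (F := fun q => q != None) (fun w => iff_refl (plang w)).
  by exists m; rewrite // !card_option card_ord in le_m.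
- by rewrite !card_option card_ord.
- by rewrite card_option card_sets card_ord /fbound subSS subSS subn0 addn1.
Qed.

End PrefixExample.

Section SuffixExample.
Variable k : nat.
Notation letter := (option ('I_k.+1 + 'I_k.+1)).
Notation sstate := (option (option (option 'I_k.+1))).

(* The language c^* (1 + b_i + a_i b_i) with c = [None], a_i = [Some (inl i)]
   and b_i = [Some (inr i)]: [Some None] reads the c's, [Some (Some (Some i))]
   waits for b_i, [Some (Some None)] has read the final letter, [None] is the sink. *)
Definition sstep (q : sstate) (a : letter) : sstate :=
  match q, a with
  | Some None, None => Some None
  | Some None, Some (inl i) => Some (Some (Some i))
  | Some None, Some (inr _) => Some (Some None)
  | Some (Some (Some j)), Some (inr i) => if i == j then Some (Some None) else None
  | _, _ => None
  end.

Definition saccept (q : sstate) := (q == Some None) || (q == Some (Some None)).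

Definition slang : lang letter := fun w => saccept (foldl sstep (Some None) w).

Lemma sstep_sink w : foldl sstep None w = None.
Proof. by elim: w. Qed.

Lemma saccept_initial q v : saccept (foldl sstep q v) -> slang v.
Proof.
case: q => [[[j|]|]|].
- case: v => [|[[i|i]|] v] //=; rewrite ?sstep_sink //.
  by case: (i == j); rewrite ?sstep_sink.
- by case: v => [|a v] //=; rewrite sstep_sink.
- by [].
- by rewrite sstep_sink.
Qed.

Lemma slang_suffix : suffix_closed slang.
Proof. by move=> u v; rewrite /slang foldl_cat; apply: saccept_initial. Qed.

Definition sword (q : sstate) : seq letter :=
  match q with
  | None => [:: Some (inr ord0); Some (inr ord0)]
  | Some None => [:: None]
  | Some (Some None) => [:: Some (inr ord0)]
  | Some (Some (Some i)) => [:: Some (inl i)]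
  end.

Lemma sword_run q : foldl sstep (Some None) (sword q) = q.
Proof. by case: q => [[[i|]|]|]. Qed.

Lemma sword_family : separating_family slang sword.
Proof.
split; first by case=> [[[]|]|].
- apply: (separated_dfa (delta := sstep) (F := saccept) _ sword_run) => // q q' neq_q.
  case: q q' neq_q => [[[i|]|]|] [[[j|]|]|] //= neq_q.
  all: try by exists [::].
  all: try by exists [:: None].
  all: try by [exists [:: Some (inr i)]; rewrite /= eqxx
             | exists [:: Some (inr j)]; rewrite /= eqxx].
  exists [:: Some (inr i)]; rewrite /= eqxx.
  by case: (i =P j) neq_q => [->|_]; rewrite ?eqxx.
- case=> [[[i|]|]|]; try by left; rewrite /slang sword_run.
  all: by right; exists [:: None] => //; rewrite /slang /= ?sstep_sink => -[/(_ isT)].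
Qed.

Lemma not_star_slang_pending i : ~ star slang [:: Some (inl i)].
Proof. by apply: not_star_cons => -[|? ?] [|? ?]. Qed.

Lemma not_star_slang_pending_next i a x :
  sstep (Some (Some (Some i))) a = None -> ~ star slang [:: Some (inl i), a & x].
Proof.
move=> step_sink; apply: not_star_cons => -[|b u] v // [<- _].
change (~ saccept (foldl sstep (sstep (Some (Some (Some i))) a) u)).
by rewrite step_sink sstep_sink.
Qed.

Definition star_sword (o : option (option 'I_k.+1)) : seq letter :=
  match o with
  | None => [:: None]
  | Some None => [:: Some (inl ord0); Some (inl ord0)]
  | Some (Some i) => [:: Some (inl i)]
  end.

Lemma star_slang_block i : star slang [:: Some (inl i); Some (inr i)].
Proof. by apply: star1; rewrite /slang /= eqxx. Qed.

Lemma star_slang_c : star slang [:: None].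
Proof. exact: star1. Qed.

Lemma not_star_slang_twice x : ~ star slang [:: Some (inl ord0), Some (inl ord0) & x].
Proof. exact: not_star_slang_pending_next. Qed.

Lemma star_sword_family : separating_family (star slang) star_sword.
Proof.
split; first by case=> [[]|].
- case=> [[i|]|] [[j|]|] // neq_o eq_o; rewrite /quot in eq_o.
  + have neq_ij : i != j by apply: contraNneq neq_o => ->.
    have [/(_ (star_slang_block i)) star_ji _] := eq_o [:: Some (inr i)].
    have step_sink : sstep (Some (Some (Some j))) (Some (inr i)) = None.
      by rewrite /= (negbTE neq_ij).
    exact: (not_star_slang_pending_next (x := [::]) step_sink star_ji).
  + by have [/(_ (star_slang_block i)) /not_star_slang_twice] := eq_o [:: Some (inr i)].
  + by have [_ /(_ star_slang_c)] := eq_o [::]; rewrite cats0 => /not_star_slang_pending.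
  + by have [_ /(_ (star_slang_block j)) /not_star_slang_twice] := eq_o [:: Some (inr j)].
  + by have [_ /(_ star_slang_c)] := eq_o [::]; rewrite cats0 => /not_star_slang_twice.
  + by have [/(_ star_slang_c)] := eq_o [::]; rewrite cats0 => /not_star_slang_pending.
  + by have [/(_ star_slang_c)] := eq_o [::]; rewrite cats0 => /not_star_slang_twice.
- case=> [[i|]|]; last by left; apply: star_slang_c.
  all: right; exists [:: None] => // -[/(_ star_slang_c) star_x _].
    exact: (not_star_slang_pending_next (a := None) (x := [::]) erefl star_x).
  exact: not_star_slang_twice star_x.
Qed.

Lemma suffix_example :
  [/\ 0 < #|{: letter}|, hyps Suffix slang k.+4, has_kappa (star slang) (fbound Suffix k.+4),
      has_kappa (star (compl (star slang))) (fbound Suffix k.+4 + 1)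
    & has_kappa (star (compl slang)) (k.+4 + 1)].
Proof.
apply: (bounds_attained (c := Suffix) (n := k.+4) (x := [:: Some (inr ord0)])
  (y := [:: Some (inr ord0); Some (inr ord0)])
  _ slang_suffix _ _ _ _ _ _ sword_family _ star_sword_family) => //.
- by rewrite card_option.
- exact: (@star_cons _ _ [:: Some (inr ord0)]) (star1 _).
- have [m le_m kappa_m] := has_kappa_leq_dfa (q0 := Some None) (delta := sstep)
    (F := saccept) (fun w => iff_refl (slang w)).
  by exists m; rewrite // !card_option card_ord in le_m.
- by rewrite !card_option card_ord.
- by rewrite !card_option card_ord /fbound subn1.
Qed.

End SuffixExample.

Section CountExample.
Variable K : nat.
Hypothesis K_gt0 : 0 < K.

Definition count_lang : lang (option bool) :=
  fun w => (None \notin w) && (count_mem (Some true) w <= K).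

Definition count_state w :=
  if None \in w then K.+1 else minn (count_mem (Some true) w) K.+1.

Lemma count_lang_cat w x : count_lang (w ++ x) <->
  (None \notin x) && (count_state w + count_mem (Some true) x <= K).
Proof.
rewrite /count_lang /count_state mem_cat count_cat negb_or.
case: (None \in w) => /=; first by split => // /andP [_]; rewrite addSn ltnNge leq_addr.
case: (leqP (count_mem (Some true) w) K) => le_w; first by rewrite (minn_idPl (leqW le_w)).
rewrite (minn_idPr le_w); split => /andP [_].
  by rewrite leqNgt (leq_trans le_w (leq_addr _ _)).
by rewrite leqNgt (leq_trans (leqnn K.+1) (leq_addr _ _)).
Qed.

Lemma count_lang_subword : subword_closed count_lang.
Proof.
move=> u w sub_uw /andP [None_w count_w]; apply/andP; split.
  by apply: contra None_w; apply: mem_subseq.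
exact: leq_trans (leq_count_subseq _ sub_uw) count_w.
Qed.

Lemma star_count_lang w : star count_lang w <-> None \notin w.
Proof.
split.
  by move: w; apply: star_ind => // u v /andP [None_u _] None_v; rewrite mem_cat negb_or None_u.
elim: w => [|a w IH]; first by move=> _; apply: star_nil.
rewrite in_cons negb_or => /andP [neq_a None_w]; rewrite -cat1s.
by apply: star_cons (IH None_w); case: a neq_a => [[]|] //= _; rewrite /count_lang.
Qed.

Definition count_word (j : option 'I_K.+1) :=
  if j is Some i then Some false :: nseq i (Some true) else [:: None].

Lemma count_lang_word (i : 'I_K.+1) x : count_lang (count_word (Some i) ++ x) <->
  (None \notin x) && (i + count_mem (Some true) x <= K).
Proof.
by rewrite /count_lang /= in_cons mem_cat mem_nseq count_cat count_nseq /= mul1n andbF.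
Qed.

Lemma count_family : separating_family count_lang count_word.
Proof.
have L_word (i : 'I_K.+1) : count_lang (count_word (Some i)).
  by have := count_lang_word i [::]; rewrite cats0 /= addn0 -ltnS ltn_ord => -[_]; apply.
have le_word (a b : 'I_K.+1) : lang_eq (quot count_lang (count_word (Some a)))
    (quot count_lang (count_word (Some b))) -> a <= b.
  move=> eq_ab; have := eq_ab (nseq (K - b) (Some true)).
  rewrite /quot !count_lang_word mem_nseq count_nseq /= mul1n andbF /=.
  move: (ltn_ord b) => lt_b [_ ba]; suff : a + (K - b) <= K by lia.
  by apply: ba; lia.
split; first by case.
- case=> [i|] [j|] neq_ij eq_ij //.
  + have eq_val : i = j :> nat by apply/eqP; rewrite eqn_leq !le_word //; apply: lang_eq_sym.
    by rewrite (val_inj eq_val) eqxx in neq_ij.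
  + by have := eq_ij [::]; rewrite /quot !cats0 => -[/(_ (L_word i))].
  + by have := eq_ij [::]; rewrite /quot !cats0 => -[_ /(_ (L_word j))].
- case=> [i|]; first by left.
  by right; exists [:: Some false] => //; rewrite /count_lang /= => -[/(_ (leq0n K))].
Qed.

Definition star_count_word (b : bool) := if b then [:: Some false] else [:: None].

Lemma star_count_family : separating_family (star count_lang) star_count_word.
Proof.
split; first by case.
- case=> [] [] // _ eq_b; have := eq_b [::]; rewrite /quot /= !star_count_lang //.
    by case=> /(_ isT).
  by case=> _ /(_ isT).
- case; first by left; apply/star_count_lang.
  by right; exists [:: Some false] => //; rewrite !star_count_lang //= => -[/(_ isT)].
Qed.

Lemma count_example c : c = Factor \/ c = Subword ->
  [/\ 0 < #|{: option bool}|, hyps c count_lang K.+2,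
      has_kappa (star count_lang) (fbound c K.+2),
      has_kappa (star (compl (star count_lang))) (fbound c K.+2 + 1)
    & has_kappa (star (compl count_lang)) (K.+2 + 1)].
Proof.
move=> c_eq.
have closed_L : closed_in c count_lang.
  by case: c_eq => ->; [apply: subword_closed_factor |]; apply: count_lang_subword.
apply: (bounds_attained (x := [:: Some false]) (y := nseq K.+1 (Some true))
  _ closed_L _ _ _ _ _ _ count_family _ star_count_family) => //.
- by rewrite card_option.
- by apply/star_count_lang; rewrite mem_nseq.
- by rewrite /count_lang count_nseq /= mul1n ltnn andbF.
- apply: (has_kappa_leq_key (key := count_state)).
    by move=> w; rewrite /count_state; case: ifP => // _; rewrite ltnS geq_minr.
  by move=> w w' eq_state x; rewrite /quot !count_lang_cat eq_state.
- by rewrite card_option card_ord.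
- by case: c_eq => ->; rewrite card_bool.
Qed.

End CountExample.

Theorem theorem7 :
  (forall (c : closure_class) (Sigma : finType) (L : lang Sigma) (n : nat),
     0 < #|Sigma| -> hyps c L n ->
     [/\ has_kappa (compl L) n,
         (exists m, [/\ has_kappa (star L) m, has_kappa (compl (star L)) m
                       & m <= fbound c n]),
         (exists m, [/\ has_kappa (star (compl (star L))) m,
                       has_kappa (compl (star (compl (star L)))) m
                       & m <= fbound c n + 1])
       & (exists m, [/\ has_kappa (star (compl L)) m,
                       has_kappa (compl (star (compl L))) m
                       & m <= n + 1])]) /\
  (forall c : closure_class, exists N : nat, forall n : nat, N <= n ->
     exists (Sigma : finType) (L : lang Sigma),
       [/\ 0 < #|Sigma|, hyps c L n,
           has_kappa (star L) (fbound c n),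
           has_kappa (star (compl (star L))) (fbound c n + 1)
         & has_kappa (star (compl L)) (n + 1)]).
Proof.
split=> [c Sigma L n _ | c]; first exact: closed_kappa_bounds.
case: c.
- exists 4 => -[|[|[|[|k]]]] // _.
  by exists ('I_k.+2 + 'I_k.+2)%type, (@plang k); apply: prefix_example.
- exists 4 => -[|[|[|[|k]]]] // _.
  by exists (option ('I_k.+1 + 'I_k.+1)), (@slang k); apply: suffix_example.
- exists 3 => -[|[|[|k]]] // _.
  by exists (option bool), (count_lang k.+1); apply: count_example; [|left].
- exists 3 => -[|[|[|k]]] // _.
  by exists (option bool), (count_lang k.+1); apply: count_example; [|right].
Qed.
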